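(* Let $n\geq3$, let $S_n$ act on $V=\mathbb{C}^n$ by its natural permutation representation, and let $\alpha=\sum_{g\in S_n}\alpha_g$ be an element of $(H^{2,1}\oplus H^{2,0})^{S_n}$. If $g$ is neither the identity nor a $3$-cycle, then $\alpha_g=0$.
   Context: $S_n$ acts by $\sigma e_i=e_{\sigma(i)}$. For $g\in S_n$, let $V^g$ be its fixed space, $(V^g)^\perp$ its orthogonal complement with respect to the standard bilinear form, and $c_g=\operatorname{codim}V^g$. Identify $(V^g)^*$ with the functionals on $V$ vanishing on $(V^g)^\perp$, and $((V^g)^* )^\perp$ with the functionals on $V$ vanishing on $V^g$, so $V^*=(V^g)^*\oplus((V^g)^* )^\perp$. Define $H^{2,d}_g=S^d(V^g)\otimes\bigwedge^{2-c_g}(V^g)^*\otimes\bigwedge^{c_g}((V^g)^* )^\perp\otimes\mathbb{C}g$ (zero if $2-c_g<0$), viewed inside $S^d(V)\otimes\bigwedge^2V^*\otimes\mathbb{C}S_n$ (wedge the two exterior factors), and $H^{2,d}=\bigoplus_{g\in S_n}H^{2,d}_g$. $S_n$ acts diagonally: $h\cdot(f\otimes\omega\otimes g)=(h\cdot f)\otimes(h\cdot\omega)\otimes hgh^{-1}$, with the contragredient action on $V^*$; $(\cdot)^{S_n}$ denotes invariants and $\alpha_g$ the component of $\alpha$ in $H^{2,1}_g\oplus H^{2,0}_g$. *)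

From HB Require Import structures.
From mathcomp Require Import all_boot all_order all_algebra all_fingroup all_field.
Set Implicit Arguments. Unset Strict Implicit. Unset Printing Implicit Defensive.
Import GRing.Theory Num.Theory.
Local Open Scope ring_scope.

(* V = C^n, realised with scalars in algC (algebraic complex numbers).
   Vectors of V and functionals of V^* are both represented by their
   coordinate vectors; a functional f acts by x |-> bform f x. *)
Definition vec n := {ffun 'I_n -> algC}.
(* S^1(V) (x) (/\^2 V^* as alternating bilinear forms) : coordinates T(k,i,j) *)
Definition tensor3 n := {ffun 'I_n * 'I_n * 'I_n -> algC}.
(* S^0(V) (x) /\^2 V^* = /\^2 V^* : coordinates w(i,j) = w(e_i, e_j) *)
Definition tensor2 n := {ffun 'I_n * 'I_n -> algC}.

(* standard bilinear form; also the pairing of V^* with V *)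
Definition bform n (x y : vec n) : algC := \sum_i x i * y i.

(* natural action s e_i = e_(s i); also the contragredient action on V^* *)
Definition act_vec n (s : 'S_n) (v : vec n) : vec n := [ffun j => v ((s^-1)%g j)].
Definition act2 n (s : 'S_n) (w : tensor2 n) : tensor2 n :=
  [ffun ij => w ((s^-1)%g ij.1, (s^-1)%g ij.2)].
Definition act3 n (s : 'S_n) (T : tensor3 n) : tensor3 n :=
  [ffun kij => T ((s^-1)%g kij.1.1, (s^-1)%g kij.1.2, (s^-1)%g kij.2)].

Definition fixsp n (g : 'S_n) (v : vec n) : Prop := act_vec g v = v.
Definition fixsp_perp n (g : 'S_n) (w : vec n) : Prop :=
  forall v, fixsp g v -> bform w v = 0.
(* (V^g)^* : functionals vanishing on (V^g)^perp *)
Definition dual_fix n (g : 'S_n) (f : vec n) : Prop :=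
  forall w, fixsp_perp g w -> bform f w = 0.
(* ((V^g)^* )^perp : functionals vanishing on V^g *)
Definition dual_fix_perp n (g : 'S_n) (f : vec n) : Prop :=
  forall v, fixsp g v -> bform f v = 0.

(* c_g = codim V^g = n - dim V^g, with V^g the (row) kernel of P_g - 1 *)
Definition codim n (g : 'S_n) : nat :=
  (n - \rank (kermx (perm_mx g - 1%:M : 'M[algC]_n)))%N.

Definition wedge n (f h : vec n) : tensor2 n :=
  [ffun ij => f ij.1 * h ij.2 - f ij.2 * h ij.1].
Definition sym_wedge n (v f h : vec n) : tensor3 n :=
  [ffun kij => v kij.1.1 * (f kij.1.2 * h kij.2 - f kij.2 * h kij.1.2)].

(* f /\ h is a generator of /\^(2-c)(V^g)^* /\ /\^c ((V^g)^* )^perp, c = c_g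
   (no generators when c_g > 2, i.e. the space is 0). *)
Definition wedge_factors n (g : 'S_n) (f h : vec n) : Prop :=
  match codim g with
  | 0%N => dual_fix g f /\ dual_fix g h
  | 1%N => dual_fix g f /\ dual_fix_perp g h
  | 2%N => dual_fix_perp g f /\ dual_fix_perp g h
  | _ => False
  end.

(* T lies in H^{2,1}_g (coefficient at g) : span of v (x) (f /\ h),
   v in S^1(V^g) = V^g (scalars absorbed in v) *)
Definition inH21 n (g : 'S_n) (T : tensor3 n) : Prop :=
  exists s : seq (vec n * vec n * vec n),
    (forall t, t \in s -> fixsp g t.1.1 /\ wedge_factors g t.1.2 t.2) /\
    T = \sum_(t <- s) sym_wedge t.1.1 t.1.2 t.2.

(* w lies in H^{2,0}_g (coefficient at g) : S^0(V^g) = C, span of f /\ h *)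
Definition inH20 n (g : 'S_n) (w : tensor2 n) : Prop :=
  exists s : seq (vec n * vec n),
    (forall t, t \in s -> wedge_factors g t.1 t.2) /\
    w = \sum_(t <- s) wedge t.1 t.2.

Definition is_3cycle n (g : 'S_n) : Prop :=
  exists a b c : 'I_n,
    [/\ [&& a != b, b != c & a != c], g a = b, g b = c, g c = a &
        forall x, x \notin [:: a; b; c] -> g x = x].

From HB Require Import structures.
From mathcomp Require Import all_boot all_order all_algebra all_fingroup all_field.
From mathcomp Require Import ring.
Set Implicit Arguments. Unset Strict Implicit. Unset Printing Implicit Defensive.
Import GRing.Theory Num.Theory.
Local Open Scope ring_scope.

(* If k centralises g, the invariance of alpha gives alpha_g = k . alpha_g,
   so alpha_g = 0 as soon as some k in the centraliser of g fixes V^g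
   pointwise and negates every generator f /\ h of the exterior factor of
   H^{2,*}_g.  When c_g > 2 there are no generators and k = g will do.
   A triangular 3x3 minor of P_g - 1 shows that c_g > 2 unless g is an
   involution or a 3-cycle.  For an involution with c_g = 1, f is
   g-invariant and h is g-anti-invariant, so k = g negates f /\ h.  For
   c_g = 2, g = (a b)(c d) and f, h are both g-anti-invariant, so f /\ h is
   a multiple of (e_a - e_b) /\ (e_c - e_d), which k = (a b) negates. *)

Lemma mxrank_mxsub (F : fieldType) m1 m2 n1 n2 (f : 'I_m2 -> 'I_m1)
    (g : 'I_n2 -> 'I_n1) (A : 'M[F]_(m1, n1)) :
  (\rank (mxsub f g A) <= \rank A)%N.
Proof.
rewrite mxsubcr -mxrank_tr trmx_mxsub; apply: leq_trans (mxrankS (rowsub_sub g _)) _.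
by rewrite mxrank_tr; apply/mxrankS/rowsub_sub.
Qed.

Lemma codimE n (g : 'S_n) : codim g = \rank (perm_mx g - 1%:M : 'M[algC]_n).
Proof. by rewrite /codim mxrank_ker subKn // rank_leq_row. Qed.

Lemma codim_gt0 n (g : 'S_n) x : g x != x -> (0 < codim g)%N.
Proof.
move=> gx; rewrite codimE lt0n mxrank_eq0; apply/eqP => /matrixP /(_ x x).
by rewrite !mxE (negbTE gx) eqxx sub0r => /eqP; rewrite oppr_eq0 oner_eq0.
Qed.

Lemma codim_gt2 n (g : 'S_n) (x1 x2 x3 : 'I_n) :
  uniq [:: x1; x2; x3] -> g x1 \notin [:: x1; x2; x3] ->
  g x2 \notin [:: x2; x3] -> g x3 != x3 -> (2 < codim g)%N.
Proof.
rewrite /= !inE andbT => /andP[/norP[d12 d13] d23].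
move=> /norP[n11 /norP[n12 n13]] /norP[n22 n23] n33.
pose x (i : 'I_3) := nth x1 [:: x1; x2; x3] i.
have -> : 3%N = \rank (mxsub x x (perm_mx g - 1%:M : 'M[algC]_n)).
  apply/esym/mxrank_unit; rewrite unitmxE det_trig.
    rewrite !big_ord_recl big_ord0 !mxE /x /= !eqxx (negbTE n11) (negbTE n22).
    by rewrite (negbTE n33) sub0r mulr1 unitfE !mulf_neq0 // oppr_eq0 oner_eq0.
  apply/is_trig_mxP => i j; rewrite !mxE /x.
  case: i => [[|[|[|?]]] ?] //; case: j => [[|[|[|?]]] ?] //= _.
  - by rewrite (negbTE n12) (negbTE d12) subr0.
  - by rewrite (negbTE n13) (negbTE d13) subr0.
  - by rewrite (negbTE n23) (negbTE d23) subr0.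
by rewrite codimE mxrank_mxsub.
Qed.

Lemma ffun_eqNr (T : finType) (R : numDomainType) (F : {ffun T -> R}) :
  (- F == F) = (F == 0).
Proof.
apply/eqP/eqP => [NF|->]; last by rewrite oppr0.
apply/ffunP => x; move/ffunP/(_ x): NF; rewrite !ffunE => /eqP.
by rewrite eqNr => /eqP.
Qed.

Lemma sum_delta_mull (I : finType) (R : pzSemiRingType) (F : I -> R) i :
  \sum_j (j == i)%:R * F j = F i.
Proof.
by rewrite (bigD1 i) //= eqxx mul1r big1 ?addr0 // => j /negbTE ->; rewrite mul0r.
Qed.

Lemma sum_delta_mulr (I : finType) (R : pzSemiRingType) (F : I -> R) i :
  \sum_j F j * (j == i)%:R = F i.
Proof.
by rewrite (bigD1 i) //= eqxx mulr1 big1 ?addr0 // => j /negbTE ->; rewrite mulr0.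
Qed.

Lemma fixspP n (g : 'S_n) (v : vec n) : fixsp g v <-> forall i, v (g i) = v i.
Proof.
split=> [gv i | gv]; last by apply/ffunP => j; rewrite ffunE -{2}(permKV g j) gv.
by move/ffunP/(_ (g i)): gv; rewrite ffunE permK.
Qed.

Lemma dual_fix_invariant n (g : 'S_n) (f : vec n) i :
  dual_fix g f -> f (g i) = f i.
Proof.
pose w : vec n := [ffun j => (j == i)%:R - (j == g i)%:R].
have w_perp : fixsp_perp g w.
  move=> v /fixspP gv; rewrite /bform.
  under eq_bigr do rewrite ffunE mulrBl.
  by rewrite sumrB !sum_delta_mull gv subrr.
move/(_ w w_perp); rewrite /bform.
under eq_bigr do rewrite ffunE mulrBr.
by rewrite sumrB !sum_delta_mulr => /eqP; rewrite subr_eq0 => /eqP.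
Qed.

Definition anti_invariant n (g : 'S_n) (f : vec n) := forall i, f (g i) = - f i.

Lemma anti_invariant_fixed n (g : 'S_n) (f : vec n) i :
  anti_invariant g f -> g i = i -> f i = 0.
Proof. by move=> af gi; apply/eqP; rewrite -eqNr -af gi. Qed.

Lemma dual_fix_perp_anti n (g : 'S_n) (h : vec n) :
  involutive g -> dual_fix_perp g h -> anti_invariant g h.
Proof.
move=> gK hperp i; pose v : vec n := [ffun j => (j == i)%:R + (j == g i)%:R].
have gv : fixsp g v.
  by apply/fixspP => j; rewrite !ffunE -{1}(gK i) !(inj_eq perm_inj) addrC.
move: (hperp v gv); rewrite /bform.
under eq_bigr do rewrite ffunE mulrDr.
by rewrite big_split /= !sum_delta_mulr addrC => /eqP; rewrite addr_eq0 => /eqP.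
Qed.

Lemma involutive_permV n (g : 'S_n) i : involutive g -> (g^-1)%g i = g i.
Proof. by move=> gK; rewrite -{1}(gK i) permK. Qed.

Lemma wedge_anti_eq0 n (g : 'S_n) (f h : vec n) a i j :
  involutive g -> anti_invariant g f -> anti_invariant g h ->
  (i \notin [:: a; g a] -> g i = i) -> (j \notin [:: a; g a] -> g j = j) ->
  f i * h j - f j * h i = 0.
Proof.
move=> gK af ah fixi fixj.
have [ia | /fixi gi] := boolP (i \in [:: a; g a]); last first.
  by rewrite !(anti_invariant_fixed _ gi) // mulr0 mul0r subr0.
have [ja | /fixj gj] := boolP (j \in [:: a; g a]); last first.
  by rewrite !(anti_invariant_fixed _ gj) // mulr0 mul0r subr0.
move: ia ja; rewrite !inE => /orP[]/eqP-> /orP[]/eqP->;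
  rewrite ?af ?ah ?gK; ring.
Qed.

Lemma anti_invariant_tperm n (g : 'S_n) (f : vec n) a x :
  involutive g -> anti_invariant g f ->
  f (tperm a (g a) x) = if x \in [:: a; g a] then - f x else f x.
Proof.
move=> gK af; rewrite !inE; case: tpermP => [->|->|/eqP/negbTE-> /eqP/negbTE->//].
- by rewrite eqxx af.
- by rewrite eqxx orbT -af gK.
Qed.

Lemma act2_sum n (k : 'S_n) I (r : seq I) (F : I -> tensor2 n) :
  act2 k (\sum_(i <- r) F i) = \sum_(i <- r) act2 k (F i).
Proof. by apply: big_morph => [T U|]; apply/ffunP => x; rewrite !ffunE. Qed.

Lemma act3_sum n (k : 'S_n) I (r : seq I) (F : I -> tensor3 n) :
  act3 k (\sum_(i <- r) F i) = \sum_(i <- r) act3 k (F i).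
Proof. by apply: big_morph => [T U|]; apply/ffunP => x; rewrite !ffunE. Qed.

Definition negates_H2 n (g k : 'S_n) : Prop :=
  (forall v, fixsp g v -> act_vec k v = v) /\
  (forall f h, wedge_factors g f h -> act2 k (wedge f h) = - wedge f h).

Lemma inH21_negated_eq0 n (g k : 'S_n) (T : tensor3 n) :
  negates_H2 g k -> inH21 g T -> act3 k T = T -> T = 0.
Proof.
move=> [kv kw] [s [sH ->]] kT; apply/eqP; rewrite -ffun_eqNr -{1}kT act3_sum.
rewrite -sumrN; apply/eqP/eq_big_seq => t /sH[/kv vk /kw fhk].
apply/ffunP => [[[p i] j]]; rewrite !ffunE /=.
move/ffunP/(_ p): vk; rewrite ffunE => ->.
by move/ffunP/(_ (i, j)): fhk; rewrite !ffunE /= => ->; rewrite mulrN opprK.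
Qed.

Lemma inH20_negated_eq0 n (g k : 'S_n) (w : tensor2 n) :
  negates_H2 g k -> inH20 g w -> act2 k w = w -> w = 0.
Proof.
move=> [_ kw] [s [sH ->]] kT; apply/eqP; rewrite -ffun_eqNr -{1}kT act2_sum.
by rewrite -sumrN; apply/eqP/eq_big_seq => t /sH/kw ->; rewrite opprK.
Qed.

Lemma negates_H2_self n (g : 'S_n) :
  (forall f h, wedge_factors g f h -> act2 g (wedge f h) = - wedge f h) ->
  negates_H2 g g.
Proof. by split. Qed.

Lemma negates_H2_codim_gt2 n (g : 'S_n) : (2 < codim g)%N -> negates_H2 g g.
Proof.
move=> cg; apply: negates_H2_self => f h.
by rewrite /wedge_factors; case: codim cg => [|[|[|]]].
Qed.

Lemma negates_H2_codim1 n (g : 'S_n) :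
  involutive g -> codim g = 1%N -> negates_H2 g g.
Proof.
move=> gK cg; apply: negates_H2_self => f h; rewrite /wedge_factors cg => -[fg hg].
apply/ffunP => -[i j]; rewrite !ffunE /= !involutive_permV //.
by rewrite !(dual_fix_invariant _ fg) !(dual_fix_perp_anti gK hg); ring.
Qed.

Lemma negates_H2_codim2 n (g : 'S_n) a c :
  involutive g -> codim g = 2%N ->
  (forall x, x \notin [:: a; g a; c; g c] -> g x = x) ->
  negates_H2 g (tperm a (g a)).
Proof.
move=> gK cg gfix; split=> [v /fixspP gv | f h].
  by apply/ffunP => x; rewrite ffunE tpermV; case: tpermP => [->|->|//]; rewrite ?gK gv.
rewrite /wedge_factors cg => -[/(dual_fix_perp_anti gK) af /(dual_fix_perp_anti gK) ah].
have fix_cd x : x \notin [:: a; g a] -> x \notin [:: c; g c] -> g x = x.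
  move=> xab xcd; apply: gfix; move: xab xcd; rewrite !inE.
  by move=> /norP[/negbTE-> /negbTE->] /norP[/negbTE-> /negbTE->].
apply/ffunP => -[i j]; rewrite !ffunE /= tpermV.
rewrite !(anti_invariant_tperm _ _ gK af) !(anti_invariant_tperm _ _ gK ah).
case: ifP => iab; case: ifP => jab; try ring.
- by rewrite !mulrNN (wedge_anti_eq0 (a := a) gK af ah) ?oppr0 // ?iab ?jab.
- move/negbT/fix_cd: iab => fix_i; move/negbT/fix_cd: jab => fix_j.
  by rewrite (wedge_anti_eq0 gK af ah fix_i fix_j) oppr0.
Qed.

Lemma moved_outside n (g : 'S_n) (s : seq 'I_n) :
  (exists2 x, x \notin s & g x != x) \/ (forall x, x \notin s -> g x = x).
Proof.
case: (pickP [pred x | (x \notin s) && (g x != x)]) => [x /andP[xs gx] | fixed].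
  by left; exists x.
by right=> x xs; move: (fixed x); rewrite /= xs => /negbFE/eqP.
Qed.

Lemma involutive_of_codim_le2 n (g : 'S_n) :
  (codim g <= 2)%N -> ~ is_3cycle g -> involutive g.
Proof.
move=> cg g3 x; apply/eqP/negPn/negP => zx; move: cg; rewrite leqNgt => /negP; apply.
move gxE : (g x) zx => y; move gyE : (g y) => z zx.
have yx : y != x by apply: contraNneq zx => yx; rewrite -gyE yx gxE yx.
have zy : z != y.
  by apply: contraNneq yx => zy; apply/eqP/(@perm_inj _ g); rewrite gyE gxE.
have gy : g y \notin [:: y; x] by rewrite gyE !inE negb_or zy.
have gx : g x != x by rewrite gxE.
have [gz | gz] := eqVneq (g z) x.
  have [[w wxyz gw] | fixed] := moved_outside g [:: x; y; z].
    move: wxyz; rewrite !inE => /norP[wx /norP[wy wz]].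
    apply: (codim_gt2 (x1 := w)) gy gx => /=.
      by rewrite !inE negb_or wy wx yx.
    rewrite !inE -gz -gxE !(inj_eq perm_inj).
    by rewrite (negbTE gw) (negbTE wx) (negbTE wz).
  case: g3; exists x, y, z; split => //.
  by rewrite eq_sym yx eq_sym zy eq_sym zx.
apply: (codim_gt2 (x1 := z)) gy gx => /=.
  by rewrite !inE negb_or zy zx yx.
rewrite !inE (negbTE gz) orbF -{2}gyE -{2}gxE !(inj_eq perm_inj).
by rewrite negb_or zy zx.
Qed.

Lemma conjg_tperm_involutive n (g : 'S_n) a :
  involutive g -> (g ^ tperm a (g a))%g = g.
Proof.
move=> gK; apply/permP => x; rewrite conjgE !permM tpermV.
case: (tpermP a (g a) x) => [->|->|xa xga]; rewrite ?gK ?tpermL ?tpermR //.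
rewrite tpermD //; last by rewrite (inj_eq perm_inj) eq_sym; apply/eqP.
by rewrite -{1}(gK a) (inj_eq perm_inj) eq_sym; apply/eqP.
Qed.

Lemma negates_H2_involutive_codim2 n (g : 'S_n) a :
  involutive g -> codim g = 2%N -> g a != a -> negates_H2 g (tperm a (g a)).
Proof.
move=> gK cg ga; have [[c cab gc] | fixed] := moved_outside g [:: a; g a].
  apply: (negates_H2_codim2 (c := c)) => //.
  have [[e eabc ge] | //] := moved_outside g [:: a; g a; c; g c].
  move: cab eabc; rewrite !inE => /norP[ca cga] /norP[ea /norP[ega /norP[ec egc]]].
  suff : (2 < codim g)%N by rewrite cg.
  apply: (codim_gt2 (x1 := e) (x2 := c) (x3 := a)) ga => /=.
  - by rewrite !inE negb_or ec ea ca.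
  - by rewrite !inE -{1}(gK c) -{1}(gK a) !(inj_eq perm_inj) !negb_or ge egc ega.
  - by rewrite !inE -{1}(gK a) (inj_eq perm_inj) negb_or gc cga.
(* A transposition has codimension 1, so this case cannot occur; it is
   simpler to treat it as (a g a)(c g c) with c = a than to exclude it. *)
apply: (negates_H2_codim2 (c := a)) => // x.
by rewrite -[[:: a; _; _; _]]/([:: a; g a] ++ [:: a; g a]) mem_cat orbb => /fixed.
Qed.

Lemma negates_H2_centraliser n (g : 'S_n) :
  g != 1%g -> ~ is_3cycle g -> exists2 k, (g ^ k)%g = g & negates_H2 g k.
Proof.
move=> g1 g3; have [cg | cg] := ltnP 2 (codim g).
  by exists g; [rewrite conjgE mulKg | exact: negates_H2_codim_gt2].
have gK := involutive_of_codim_le2 cg g3.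
have [a ga] : exists a, g a != a.
  apply/existsP; apply: contraR g1 => /existsPn fixed.
  by apply/eqP/permP => x; rewrite perm1; apply/eqP/negPn.
move: cg; case cgE: (codim g) => [|[|[|//]]] _.
- by move: (codim_gt0 ga); rewrite cgE.
- by exists g; [rewrite conjgE mulKg | exact: negates_H2_codim1].
exists (tperm a (g a)); first exact: conjg_tperm_involutive.
exact: negates_H2_involutive_codim2.
Qed.

Theorem lemma4p3 (n : nat) (hn : (3 <= n)%N)
  (a1 : 'S_n -> tensor3 n) (a0 : 'S_n -> tensor2 n) :
  (forall g, inH21 g (a1 g)) ->
  (forall g, inH20 g (a0 g)) ->
  (forall h g, a1 (g ^ h)%g = act3 h (a1 g) /\ a0 (g ^ h)%g = act2 h (a0 g)) ->
  forall g : 'S_n, g != 1%g -> ~ is_3cycle g -> a1 g = 0%R /\ a0 g = 0%R.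
Proof.
move=> a1H21 a0H20 a_inv g g1 g3.
have [k gk negk] := negates_H2_centraliser g1 g3.
have [a1k a0k] := a_inv k g; rewrite gk in a1k a0k.
split; first exact: inH21_negated_eq0 negk (a1H21 g) (esym a1k).
exact: inH20_negated_eq0 negk (a0H20 g) (esym a0k).
Qed.
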